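(* Let $X$ be a set and $F:\mathcal{P}(X)\to\mathcal{P}(X)$ a closure operator. Then: (1) there exist a set $Y$ and a relation $r\subseteq X\times Y$ with $F=[r]\circ\langle r^{\sim}\rangle$, and there exist a set $Y'$ and a relation $r'\subseteq X\times Y'$ with $F=r'^{\perp}\circ r'^{\sim\perp}$; (2) for every cardinal $\kappa$, the following are equivalent: (a) there exist a set $Y$ with $|Y|=\kappa$ and $r\subseteq X\times Y$ with $F=[r]\circ\langle r^{\sim}\rangle$; (b) there exist a set $Y$ with $|Y|=\kappa$ and $r\subseteq X\times Y$ with $F=r^{\perp}\circ (r^{\sim})^{\perp}$; (c) the complete inf-lattice $(\mathbf{Fix}(F),\subseteq,\bigcap)$ has an inf-basis indexed by a set of cardinality $\kappa$.
   Context: A closure operator on $\mathcal{P}(X)$ is a map $F$ that is monotonic, expansive ($U\subseteq F(U)$), and satisfies $F(F(U))\subseteq F(U)$; $\mathbf{Fix}(F)=\{U\subseteq X\mid F(U)=U\}$, which is closed under arbitrary intersections. An inf-basis of $(\mathbf{Fix}(F),\subseteq,\bigcap)$ is a family $(U_i)_{i\in I}$ of elements of $\mathbf{Fix}(F)$ (repetitions allowed) such that every $V\in\mathbf{Fix}(F)$ satisfies $V=\bigcap\{U_i\mid V\subseteq U_i\}$ (empty intersection $=X$). For $r\subseteq X\times Y$, $r^{\sim}=\{(y,x)\mid (x,y)\in r\}$. For $t\subseteq A\times B$, maps $\mathcal{P}(B)\to\mathcal{P}(A)$: $\langle t\rangle(V)=\{a\mid \exists b,\ (a,b)\in t\wedge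 b\in V\}$, $[t](V)=\{a\mid \forall b,\ (a,b)\in t\Rightarrow b\in V\}$, $t^{\perp}(V)=\{a\mid \forall b\in V,\ (a,b)\in t\}$. Classical logic is used. *)

Definition subset {A : Type} (U V : A -> Prop) : Prop := forall a, U a -> V a.
Definition set_eq {A : Type} (U V : A -> Prop) : Prop := forall a, U a <-> V a.

Definition map_eq {A B : Type} (F G : (A -> Prop) -> (B -> Prop)) : Prop :=
  forall U, set_eq (F U) (G U).

Definition closure_operator {X : Type} (F : (X -> Prop) -> (X -> Prop)) : Prop :=
  (forall U V, subset U V -> subset (F U) (F V)) /\
  (forall U, subset U (F U)) /\
  (forall U, subset (F (F U)) (F U)).

Definition Fix {X : Type} (F : (X -> Prop) -> (X -> Prop)) (U : X -> Prop) : Prop :=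
  set_eq (F U) U.

(* Inf-basis of (Fix F, ⊆, ⋂): a family indexed by I of fixed points such that
   every fixed point V is the intersection of the members containing it
   (empty intersection = X). *)
Definition inf_basis {X I : Type} (F : (X -> Prop) -> (X -> Prop))
  (U : I -> (X -> Prop)) : Prop :=
  (forall i, Fix F (U i)) /\
  (forall V, Fix F V ->
     forall x, V x <-> (forall i, subset V (U i) -> U i x)).

Definition conv {A B : Type} (r : A -> B -> Prop) : B -> A -> Prop :=
  fun b a => r a b.

Definition diam {A B : Type} (t : A -> B -> Prop) (V : B -> Prop) : A -> Prop :=
  fun a => exists b, t a b /\ V b.
Definition box {A B : Type} (t : A -> B -> Prop) (V : B -> Prop) : A -> Prop :=
  fun a => forall b, t a b -> V b.
Definition perp {A B : Type} (t : A -> B -> Prop) (V : B -> Prop) : A -> Prop :=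
  fun a => forall b, V b -> t a b.

Definition comp {A B C : Type} (G : B -> C) (H : A -> B) : A -> C := fun x => G (H x).

Definition equipotent (A B : Type) : Prop :=
  exists (f : A -> B) (g : B -> A),
    (forall a, g (f a) = a) /\ (forall b, f (g b) = b).

From Stdlib Require Import Classical.

(* For a relation r ⊆ X × Y, the operator r^⊥ ∘ r~^⊥ sends U to the intersection
   of the sets r(-, y) that contain U.  Hence it coincides with a closure operator F
   exactly when the family (r(-, y))_y is an inf-basis of Fix F, and Fix F itself is
   such a family.  By contraposition, [r] ∘ <r~> is the operator of the same kind
   built from the complementary relation, so the two representations are
   interchangeable without changing Y. *)

Definition rel_compl {A B : Type} (r : A -> B -> Prop) : A -> B -> Prop :=
  fun a b => ~ r a b.

Definition incidence {X I : Type} (U : I -> X -> Prop) : X -> I -> Prop :=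
  fun x i => U i x.

Lemma box_diam_eq_perp_compl {X Y : Type} (r : X -> Y -> Prop) :
  map_eq (comp (box r) (diam (conv r)))
         (comp (perp (rel_compl r)) (perp (conv (rel_compl r)))).
Proof.
  intros U x; unfold comp, box, diam, perp, conv, rel_compl; split.
  - intros Hx y Hy Hr. destruct (Hx y Hr) as [x' [Hr' HU]]. exact (Hy x' HU Hr').
  - intros Hx y Hr. apply NNPP; intros Hno. apply (Hx y); [|exact Hr].
    intros x' HU Hr'. apply Hno. exists x'; split; assumption.
Qed.

Lemma perp_eq_box_diam_compl {X Y : Type} (r : X -> Y -> Prop) :
  map_eq (comp (perp r) (perp (conv r)))
         (comp (box (rel_compl r)) (diam (conv (rel_compl r)))).
Proof.
  intros U x; unfold comp, box, diam, perp, conv, rel_compl; split.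
  - intros Hx y Hnr. apply NNPP; intros Hno. apply Hnr, Hx.
    intros x' HU. apply NNPP; intros Hnr'. apply Hno. exists x'; split; assumption.
  - intros Hx y Hy. apply NNPP; intros Hnr.
    destruct (Hx y Hnr) as [x' [Hnr' HU]]. exact (Hnr' (Hy x' HU)).
Qed.

Lemma map_eq_trans {A B : Type} (F G H : (A -> Prop) -> (B -> Prop)) :
  map_eq F G -> map_eq G H -> map_eq F H.
Proof.
  intros HFG HGH U a. rewrite (HFG U a). apply HGH.
Qed.

Section InfBasis.

Variables (X : Type) (F : (X -> Prop) -> (X -> Prop)).
Hypothesis F_closure : closure_operator F.

Lemma closure_Fix (V : X -> Prop) : Fix F (F V).
Proof.
  destruct F_closure as [_ [F_ext F_idem]]. intros x; split.
  - apply F_idem.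
  - apply F_ext.
Qed.

Lemma inf_basis_perp {I : Type} (U : I -> X -> Prop) :
  inf_basis F U ->
  map_eq F (comp (perp (incidence U)) (perp (conv (incidence U)))).
Proof.
  destruct F_closure as [F_mono [F_ext _]]. intros [U_fix U_basis] V x.
  unfold comp, perp, conv, incidence.
  rewrite (U_basis (F V) (closure_Fix V) x). split.
  - intros HFx i HV. apply HFx. intros a HFa.
    apply (U_fix i a), (F_mono V (U i)); assumption.
  - intros Hx i HFV. apply Hx. intros a HVa. apply HFV, F_ext, HVa.
Qed.

Lemma perp_inf_basis {I : Type} (U : I -> X -> Prop) :
  map_eq F (comp (perp (incidence U)) (perp (conv (incidence U)))) ->
  inf_basis F U.
Proof.
  destruct F_closure as [_ [F_ext _]]. intros HF. split.
  - intros i a; split; [|apply F_ext].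
    intros HFa. apply (proj1 (HF (U i) a) HFa i). intros b Hb; exact Hb.
  - intros V HV x; split.
    + intros Hx i HVi. apply (proj1 (HF V x)); [apply F_ext, Hx | exact HVi].
    + intros Hx. apply HV, (proj2 (HF V x)). intros i HVi. apply Hx, HVi.
Qed.

Lemma Fix_inf_basis : inf_basis F (fun V : {V : X -> Prop | Fix F V} => proj1_sig V).
Proof.
  split.
  - intros [V HV]. exact HV.
  - intros V HV x; split.
    + intros Hx W HVW. apply HVW, Hx.
    + intros Hx. apply (Hx (exist _ V HV)). intros a Ha; exact Ha.
Qed.

End InfBasis.

Theorem corollary3 (X : Type) (F : (X -> Prop) -> (X -> Prop)) :
  closure_operator F ->
  ( (exists (Y : Type) (r : X -> Y -> Prop),
        map_eq F (comp (box r) (diam (conv r)))) /\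
    (exists (Y' : Type) (r' : X -> Y' -> Prop),
        map_eq F (comp (perp r') (perp (conv r')))) ) /\
  (forall K : Type,
     ( (exists (Y : Type) (r : X -> Y -> Prop), equipotent Y K /\
          map_eq F (comp (box r) (diam (conv r))))
       <->
       (exists (Y : Type) (r : X -> Y -> Prop), equipotent Y K /\
          map_eq F (comp (perp r) (perp (conv r)))) ) /\
     ( (exists (Y : Type) (r : X -> Y -> Prop), equipotent Y K /\
          map_eq F (comp (perp r) (perp (conv r))))
       <->
       (exists (I : Type) (U : I -> (X -> Prop)), equipotent I K /\
          inf_basis F U) )).
Proof.
  intros F_closure.
  pose proof (inf_basis_perp X F F_closure _ (Fix_inf_basis X F)) as F_perp.
  split; [split|intros K; split; split].
  - eexists; eexists. exact (map_eq_trans _ _ _ F_perp (perp_eq_box_diam_compl _)).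
  - eexists; eexists. exact F_perp.
  - intros [Y [r [HY Hr]]]. exists Y, (rel_compl r). split; [exact HY|].
    exact (map_eq_trans _ _ _ Hr (box_diam_eq_perp_compl r)).
  - intros [Y [r [HY Hr]]]. exists Y, (rel_compl r). split; [exact HY|].
    exact (map_eq_trans _ _ _ Hr (perp_eq_box_diam_compl r)).
  - intros [Y [r [HY Hr]]]. exists Y, (fun y x => r x y). split; [exact HY|].
    exact (perp_inf_basis X F F_closure _ Hr).
  - intros [I [U [HI HU]]]. exists I, (incidence U). split; [exact HI|].
    exact (inf_basis_perp X F F_closure U HU).
Qed.
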